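(* Let $M=(M_{ij})$ be an $n\times n$ matrix (over a commutative ring) with $M_{ij}=0$ whenever $i+j\notin\{n+1,n+2\}$. Then $$\det(t-M)=\sum_{k=0}^n t^{n-k}(-1)^{\frac{k(k+1)}{2}}\sum_{(A,B)}\prod_{(i,j)\in A\cup B}M_{ij},$$ where the inner sum runs over pairs $(A,B)$ with $A\subset\{(i,j):i+j=n+1\}$, $B\subset\{(i,j):i+j=n+2\}$ (indices in $\{1,\dots,n\}$) such that: (1) $A$ and $B$ are both invariant under $(i,j)\mapsto(j,i)$; (2) the sets $\{i:(i,j)\in A\}$ and $\{i:(i,j)\in B\}$ are disjoint, and likewise $\{j:(i,j)\in A\}$ and $\{j:(i,j)\in B\}$ are disjoint; (3) $|A|+|B|=k$. *)

From mathcomp Require Import all_boot all_order all_algebra.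
Set Implicit Arguments. Unset Strict Implicit. Unset Printing Implicit Defensive.
Import GRing.Theory.
Local Open Scope ring_scope.

(* Indices are 0-based ordinals 'I_n; the paper's 1-based index i corresponds
   to the ordinal with value i-1, so the paper's condition i + j = n + 1
   becomes (i0 + 1) + (j0 + 1) = n + 1. *)

Definition admissible_pair (n k : nat) (A B : {set 'I_n * 'I_n}) : bool :=
  [&& [forall p in A, (p.1 + 1 + (p.2 + 1) == n + 1)%N],
      [forall p in B, (p.1 + 1 + (p.2 + 1) == n + 2)%N],
      [forall p in A, (p.2, p.1) \in A],
      [forall p in B, (p.2, p.1) \in B],
      [disjoint [set p.1 | p in A] & [set p.1 | p in B]],
      [disjoint [set p.2 | p in A] & [set p.2 | p in B]] &
      (#|A| + #|B| == k)%N].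

From mathcomp Require Import all_boot all_order all_algebra all_fingroup.
From mathcomp Require Import zify.
Set Implicit Arguments. Unset Strict Implicit. Unset Printing Implicit Defensive.
Import GRing.Theory.
Local Open Scope ring_scope.

(* Expanding det (t - M) along principal minors, the coefficient of t^(n-k) is
   (-1)^k times the sum of the principal k-minors of M.  A permutation s of a
   k-set S contributes to the minor on S only if every (i, s i) lies on one of
   the two antidiagonals; any such s reverses the order of S, hence is the
   involution exchanging the j-th smallest and the j-th largest element of S,
   of sign (-1)^C(k,2).  Splitting its graph along the two antidiagonals is a
   bijection onto the admissible pairs (A, B) whose rows form S, and
   (-1)^k (-1)^C(k,2) = (-1)^(k(k+1)/2). *)

Lemma prod_char_poly_mx_perm (R : comNzRingType) n (M : 'M[R]_n) (s : 'S_n) :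
  \prod_i char_poly_mx M i (s i) =
  \sum_(J : {set 'I_n} | perm_on J s)
     'X^(n - #|J|) * ((-1) ^+ #|J| * \prod_(i in J) M i (s i))%:P.
Proof.
under eq_bigr => i _ do rewrite !mxE addrC.
rewrite bigA_distr (bigID (fun J => perm_on J s)) /= [X in _ + X]big1 ?addr0.
  apply: eq_bigr => J sJ; rewrite (bigID (mem J)) /= mulrC; congr (_ * _).
    rewrite (eq_bigr (fun _ => 'X)); last first.
      by move=> i iJ; rewrite (negbTE iJ) (out_perm sJ) // eqxx.
    rewrite prodr_const [in RHS](_ : n - #|J| = #|~: J|)%N.
      by congr (_ ^+ _); apply: eq_card => i; rewrite !inE.
    by rewrite [#|~: J|]cardsCs setCK card_ord.
  rewrite (eq_bigr (fun i => - (M i (s i))%:P)); last by move=> i ->.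
  by rewrite prodrN rmorphM rmorph_sign rmorph_prod.
move=> J /subsetPn [i]; rewrite inE => moved iJ.
by rewrite (bigD1 i) //= (negbTE iJ) eq_sym (negbTE moved) mulr0n mul0r.
Qed.

Lemma char_poly_sum_perm_on (R : comNzRingType) n (M : 'M[R]_n) :
  char_poly M =
  \sum_(J : {set 'I_n}) 'X^(n - #|J|) *
     ((-1) ^+ #|J| *
      \sum_(s : 'S_n | perm_on J s) (-1) ^+ s * \prod_(i in J) M i (s i))%:P.
Proof.
rewrite /char_poly /determinant.
under eq_bigr => s _ do rewrite prod_char_poly_mx_perm mulr_sumr.
rewrite (exchange_big_dep xpredT) //=; apply: eq_bigr => J _.
rewrite rmorphM /= rmorph_sum !mulr_sumr; apply: eq_bigr => s _.
by rewrite !rmorphM /= !rmorph_sign mulrCA [(-1) ^+ s * _]mulrCA.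
Qed.

Definition reverses_on n (S : {set 'I_n}) (s : 'S_n) :=
  {in S &, forall i j : 'I_n, (i < j)%N -> (s j < s i)%N}.

Section ReversingPermutation.

Variables (n : nat) (S : {set 'I_n}) (s : 'S_n).
Hypotheses (sS : perm_on S s) (rev_s : reverses_on S s).

Lemma reverses_on_le i j : i \in S -> j \in S -> (i <= j)%N -> (s j <= s i)%N.
Proof.
move=> iS jS; rewrite leq_eqVlt => /orP [/eqP/val_inj -> // | lt_ij].
exact/ltnW/rev_s.
Qed.

Lemma reverses_on_ends a b : a \in S -> b \in S ->
  {in S, forall i : 'I_n, a <= i <= b}%N -> s a = b /\ s b = a.
Proof.
move=> aS bS bounds.
have preim y : y \in S -> exists2 c, c \in S & s c = y.
  by move=> yS; exists (s^-1 y)%g; rewrite ?permKV // -(perm_closed _ sS) permKV.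
have saS : s a \in S by rewrite perm_closed.
have sbS : s b \in S by rewrite perm_closed.
split; apply: val_inj; apply/eqP; rewrite eqn_leq.
- have /andP [_ -> /=] := bounds _ saS.
  have [c cS <-] := preim _ bS; apply: reverses_on_le => //.
  by case/andP: (bounds _ cS).
- have /andP [-> _] := bounds _ sbS; rewrite andbT.
  have [c cS <-] := preim _ aS; apply: reverses_on_le => //.
  by case/andP: (bounds _ cS).
Qed.

End ReversingPermutation.

Lemma odd_bin2SS m : odd 'C(m.+2, 2) = ~~ odd 'C(m, 2).
Proof.
by rewrite binS bin1 binS bin1 -addnA addnS addnn oddD oddS odd_double addbT.
Qed.

Lemma swap_ends_agree (T : finType) (s : {perm T}) a b x :
  s a = b -> s b = a -> x != a -> x != b -> (s * tperm a b)%g x = s x.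
Proof.
move=> sa sb xa xb; rewrite permM tpermD //.
  by rewrite -sb (inj_eq perm_inj) eq_sym.
by rewrite -sa (inj_eq perm_inj) eq_sym.
Qed.

Lemma reverses_on_peel n (S : {set 'I_n}) (s : 'S_n) a b :
  perm_on S s -> reverses_on S s -> s a = b -> s b = a ->
  perm_on (S :\ a :\ b) (s * tperm a b)%g /\
  reverses_on (S :\ a :\ b) (s * tperm a b)%g.
Proof.
move=> sS rev_s sa sb; split.
  apply/subsetP => x; rewrite inE.
  have [->|xa] := eqVneq x a; first by rewrite permM sa tpermR eqxx.
  have [->|xb] := eqVneq x b; first by rewrite permM sb tpermL eqxx.
  rewrite swap_ends_agree // => moved.
  by rewrite !inE xa xb (subsetP sS) // inE.
move=> i j; rewrite !inE => /and3P [ib ia iS] /and3P [jb ja jS].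
rewrite !swap_ends_agree //; exact: rev_s.
Qed.

Lemma reverses_on_involutive_sign n (S : {set 'I_n}) (s : 'S_n) :
  perm_on S s -> reverses_on S s -> involutive s /\ odd_perm s = odd 'C(#|S|, 2).
Proof.
have [k] := ubnP #|S|; elim: k S s => // k IH S s cardS sS rev_s.
have [small | two_le] := leqP #|S| 1.
  rewrite (perm_on_id sS small) odd_perm1; split => [x|]; first by rewrite !perm1.
  by case: #|S| small => [|[|]].
have [x xS] : exists x, x \in S by apply/card_gt0P; lia.
have [a aS min_a] := arg_minnP (@nat_of_ord n) xS; have {}aS : a \in S := aS.
have [b bS max_b] := arg_maxnP (@nat_of_ord n) xS; have {}bS : b \in S := bS.
have bounds : {in S, forall i : 'I_n, a <= i <= b}%N.
  by move=> i iS; apply/andP; split; [exact: min_a | exact: max_b].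
have [sa sb] := reverses_on_ends sS rev_s aS bS bounds.
have ab : a != b.
  apply: contraTneq two_le => eq_ab; rewrite -leqNgt -(cards1 a) subset_leq_card //.
  apply/subsetP => i iS; rewrite inE; apply/eqP/val_inj/eqP.
  by rewrite eqn_leq; have := bounds i iS; rewrite -eq_ab andbC.
set S' := S :\ a :\ b.
have cardS' : #|S| = #|S'|.+2.
  by rewrite (cardsD1 a S) aS (cardsD1 b (S :\ a)) !inE eq_sym ab bS.
have [sS' rev_s'] := reverses_on_peel sS rev_s sa sb.
have [inv' odd'] := IH S' _ ltac:(lia) sS' rev_s'.
split.
  move=> y; have [->|ya] := eqVneq y a; first by rewrite sa sb.
  have [->|yb] := eqVneq y b; first by rewrite sb sa.
  have s'y : (s * tperm a b)%g y = s y by rewrite swap_ends_agree.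
  have sya : s y != a by rewrite -sb (inj_eq perm_inj).
  have syb : s y != b by rewrite -sa (inj_eq perm_inj).
  by rewrite -(swap_ends_agree (x := s y) sa sb) // -s'y inv'.
have -> : s = (s * tperm a b * tperm a b)%g by rewrite -mulgA tperm2 mulg1.
by rewrite odd_permM odd_tperm ab odd' cardS' odd_bin2SS addbT.
Qed.

Section PermutationGraphs.

Variable T : finType.

Definition graph_on (S : {set T}) (s : {perm T}) : {set T * T} :=
  [set (i, s i) | i in S].

Lemma card_graph_on S s : #|graph_on S s| = #|S|.
Proof. by rewrite card_imset // => i j []. Qed.

Lemma fst_graph_on S s : [set p.1 | p in graph_on S s] = S.
Proof. by rewrite -imset_comp imset_id. Qed.

Lemma graph_on_fst_inj S s : {in graph_on S s &, injective (fun p => p.1)}.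
Proof. by move=> _ _ /imsetP [i _ ->] /imsetP [j _ ->] /= ->. Qed.

Lemma graph_on_snd_inj S s : {in graph_on S s &, injective (fun p => p.2)}.
Proof. by move=> _ _ /imsetP [i _ ->] /imsetP [j _ ->] /= /perm_inj ->. Qed.

Lemma graph_on_inj S s t :
  perm_on S s -> perm_on S t -> graph_on S s = graph_on S t -> s = t.
Proof.
move=> sS tS eq_st; apply/permP => i.
have [iS | iNS] := boolP (i \in S); last by rewrite (out_perm sS) ?(out_perm tS).
have : (i, s i) \in graph_on S t by rewrite -eq_st imset_f.
by case/imsetP => j _ [-> ->].
Qed.

Lemma graph_on_swap S s p : perm_on S s -> involutive s ->
  p \in graph_on S s -> (p.2, p.1) \in graph_on S s.
Proof.
move=> sS inv_s /imsetP [i iS ->] /=.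
by apply/imsetP; exists (s i); rewrite ?perm_closed ?inv_s.
Qed.

Lemma graph_on_of_functional (G : {set T * T}) :
  (forall i j j', (i, j) \in G -> (i, j') \in G -> j = j') ->
  (forall i j, (i, j) \in G -> (j, i) \in G) ->
  exists2 s : {perm T},
    perm_on [set p.1 | p in G] s & G = graph_on [set p.1 | p in G] s.
Proof.
move=> functional symmetric; set S := [set p.1 | p in G].
pose f i := if [pick j | (i, j) \in G] is Some j then j else i.
have fP i j : (i, j) \in G -> f i = j.
  move=> Gij; rewrite /f; case: pickP => [j' Gij' | /(_ j)].
    exact: functional Gij' Gij.
  by rewrite Gij.
have f_out i : i \notin S -> f i = i.
  move=> iNS; rewrite /f; case: pickP => // j Gij.
  by case/negP: iNS; apply/imsetP; exists (i, j).
have f_graph i : i \in S -> (i, f i) \in G.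
  by case/imsetP => -[i' j] Gij -> /=; rewrite (fP _ j).
have f_inv : involutive f.
  move=> i; have [iS | iNS] := boolP (i \in S); last by rewrite !f_out.
  exact/fP/symmetric/f_graph.
exists (perm (inv_inj f_inv)).
  by apply/subsetP => i; rewrite inE permE; apply: contraR => /f_out ->.
apply/setP => -[i j]; apply/idP/imsetP => [Gij | [i' i'S [-> ->]]].
  by exists i; [apply/imsetP; exists (i, j) | rewrite permE (fP _ _ Gij)].
by rewrite permE f_graph.
Qed.

End PermutationGraphs.

Definition antidiag n (c : nat) : {set 'I_n * 'I_n} :=
  [set p : 'I_n * 'I_n | (p.1 + 1 + (p.2 + 1) == c)%N].

Definition band n : {set 'I_n * 'I_n} := antidiag n (n + 1) :|: antidiag n (n + 2).

Definition band_split n (S : {set 'I_n}) (s : 'S_n) :=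
  (graph_on S s :&: antidiag n (n + 1), graph_on S s :&: antidiag n (n + 2)).

Definition rows n (AB : {set 'I_n * 'I_n} * {set 'I_n * 'I_n}) : {set 'I_n} :=
  [set p.1 | p in AB.1 :|: AB.2].

Lemma antidiag_fst_inj n c : {in antidiag n c &, injective (fun p => p.1)}.
Proof.
move=> [i j] [i' j']; rewrite !inE /= => /eqP sum_ij /eqP + eq_ii'; rewrite -eq_ii'.
by rewrite -sum_ij => /eqP; rewrite eqn_add2l eqn_add2r => /eqP/val_inj ->.
Qed.

Lemma antidiag_swap n c p : ((p.2, p.1) \in antidiag n c) = (p \in antidiag n c).
Proof. by rewrite !inE addnC. Qed.

Lemma disjoint_antidiag n : [disjoint antidiag n (n + 1) & antidiag n (n + 2)].
Proof.
rewrite -setI_eq0; apply/eqP/setP => p; rewrite !inE.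
by apply/negP => /andP [/eqP -> /eqP]; lia.
Qed.

Lemma band_reverses_on n (S : {set 'I_n}) (s : 'S_n) :
  graph_on S s \subset band n -> reverses_on S s.
Proof.
move=> /subsetP band_s i j iS jS lt_ij.
have ne : (s i : nat) != s j.
  by apply/eqP => /val_inj /perm_inj eq_ij; rewrite eq_ij ltnn in lt_ij.
have := band_s _ (imset_f (fun i => (i, s i)) iS).
have := band_s _ (imset_f (fun i => (i, s i)) jS).
by rewrite !inE /= => /orP [] /eqP + /orP [] /eqP; move: ne => /eqP; lia.
Qed.

Lemma band_split_union n (S : {set 'I_n}) (s : 'S_n) :
  graph_on S s \subset band n ->
  (band_split S s).1 :|: (band_split S s).2 = graph_on S s.
Proof. by move=> sub; rewrite -setIUr; apply/setIidPl. Qed.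

Lemma imset_setI_disjoint (T T' : finType) (f : T -> T') (H X Y : {set T}) :
  {in H &, injective f} -> [disjoint X & Y] ->
  [disjoint f @: (H :&: X) & f @: (H :&: Y)].
Proof.
move=> injf XY; rewrite -setI_eq0 -imsetI.
  by rewrite setIACA setIid (disjoint_setI0 XY) setI0 imset0.
by move=> x y /setIP [xH _] /setIP [yH _]; apply: injf.
Qed.

Lemma band_split_admissible n (S : {set 'I_n}) (s : 'S_n) :
  perm_on S s -> graph_on S s \subset band n ->
  admissible_pair #|S| (band_split S s).1 (band_split S s).2 &&
  (rows (band_split S s) == S).
Proof.
move=> sS sub; have [inv_s _] := reverses_on_involutive_sign sS (band_reverses_on sub).
rewrite /rows band_split_union // fst_graph_on eqxx andbT.
have D12 := disjoint_antidiag n.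
apply/and5P; split; try by apply/forall_inP => p /setIP [_]; rewrite inE.
- by apply/forall_inP => p /setIP [Gp Dp]; rewrite inE graph_on_swap // antidiag_swap.
- by apply/forall_inP => p /setIP [Gp Dp]; rewrite inE graph_on_swap // antidiag_swap.
apply/and3P; split.
- exact/imset_setI_disjoint/D12/graph_on_fst_inj.
- exact/imset_setI_disjoint/D12/graph_on_snd_inj.
rewrite -cardsUI band_split_union // card_graph_on /= setIACA setIid.
by rewrite (disjoint_setI0 D12) setI0 cards0 addn0.
Qed.

Lemma admissible_sub_antidiag n k (A B : {set 'I_n * 'I_n}) :
  admissible_pair k A B ->
  A \subset antidiag n (n + 1) /\ B \subset antidiag n (n + 2).
Proof.
by case/and5P => /forall_inP A1 /forall_inP B2 _ _ _; split; apply/subsetP => p;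
  rewrite inE; [apply: A1 | apply: B2].
Qed.

Lemma rows_card n k (A B : {set 'I_n * 'I_n}) :
  admissible_pair k A B -> #|rows (A, B)| = k.
Proof.
move=> adm; have [/subsetP subA /subsetP subB] := admissible_sub_antidiag adm.
case/and5P: adm => _ _ _ _ /and3P [rowsAB _ /eqP <-].
have injA : {in A &, injective (fun p => p.1)}.
  by move=> p q /subA Dp /subA Dq; exact: antidiag_fst_inj Dp Dq.
have injB : {in B &, injective (fun p => p.1)}.
  by move=> p q /subB Dp /subB Dq; exact: antidiag_fst_inj Dp Dq.
rewrite /rows imsetU cardsU (disjoint_setI0 rowsAB) cards0 subn0.
by rewrite !card_in_imset.
Qed.

Lemma admissible_band_split n k (A B : {set 'I_n * 'I_n}) :
  admissible_pair k A B ->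
  exists2 s : 'S_n,
    perm_on (rows (A, B)) s && (graph_on (rows (A, B)) s \subset band n)
    & band_split (rows (A, B)) s = (A, B).
Proof.
move=> adm; have [subA subB] := admissible_sub_antidiag adm.
case/and5P: adm => _ _ /forall_inP symA /forall_inP symB /and3P [rowsAB _ _].
have functional i j j' : (i, j) \in A :|: B -> (i, j') \in A :|: B -> j = j'.
  rewrite !inE => /orP [Aij | Bij] /orP [Aij' | Bij'].
  - by case: (antidiag_fst_inj (subsetP subA _ Aij) (subsetP subA _ Aij') erefl).
  - by have := disjointFr rowsAB (imset_f fst Aij); rewrite (imset_f fst Bij').
  - by have := disjointFr rowsAB (imset_f fst Aij'); rewrite (imset_f fst Bij).
  - by case: (antidiag_fst_inj (subsetP subB _ Bij) (subsetP subB _ Bij') erefl).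
have symmetric i j : (i, j) \in A :|: B -> (j, i) \in A :|: B.
  by rewrite !inE => /orP [/symA | /symB] ->; rewrite ?orbT.
have [s sS graph_s] := graph_on_of_functional functional symmetric.
exists s; first by rewrite sS -graph_s setUSS.
rewrite /band_split -graph_s !setIUl (setIidPl subA) (setIidPl subB).
have D21 : [disjoint antidiag n (n + 2) & antidiag n (n + 1)].
  by rewrite disjoint_sym disjoint_antidiag.
rewrite (disjoint_setI0 (disjointWl subA (disjoint_antidiag n))).
by rewrite (disjoint_setI0 (disjointWl subB D21)) setU0 set0U.
Qed.

Lemma sum_perm_on_band (R : comNzRingType) n (M : 'M[R]_n)
    (supp_M : forall i j, (i, j) \notin band n -> M i j = 0) (S : {set 'I_n}) :
  \sum_(s : 'S_n | perm_on S s) (-1) ^+ s * \prod_(i in S) M i (s i) =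
  (-1) ^+ 'C(#|S|, 2) *
  \sum_(AB : {set 'I_n * 'I_n} * {set 'I_n * 'I_n} |
        admissible_pair #|S| AB.1 AB.2 && (rows AB == S))
     \prod_(p in AB.1 :|: AB.2) M p.1 p.2.
Proof.
rewrite (bigID (fun s => graph_on S s \subset band n)) /=.
rewrite [X in _ + X]big1 ?addr0; last first.
  move=> s /andP [_ /subsetPn [p]]; rewrite /graph_on => /imsetP [i iS ->] off_band.
  by rewrite (bigD1 i) //= supp_M // mul0r mulr0.
pose P := [set s : 'S_n | perm_on S s && (graph_on S s \subset band n)].
pose F AB := (-1) ^+ 'C(#|S|, 2) * \prod_(p in AB.1 :|: AB.2) M p.1 p.2 : R.
transitivity (\sum_(s in P) F (band_split S s)).
  apply: eq_big => [s | s /andP [sS sub]]; first by rewrite inE.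
  have [_ ->] := reverses_on_involutive_sign sS (band_reverses_on sub).
  by rewrite signr_odd /F band_split_union // big_imset //= => i j _ _ [].
rewrite mulr_sumr -big_imset; last first.
  move=> s t; rewrite !inE => /andP [sS subs] /andP [tS subt] eq_st.
  apply: (graph_on_inj sS tS).
  by rewrite -(band_split_union subs) -(band_split_union subt) eq_st.
apply: eq_bigl => -[A B]; apply/imsetP/idP => [[s] | /andP [adm /eqP rowsS]].
  by rewrite inE => /andP [sS sub] ->; apply: band_split_admissible.
have [s sP split_s] := admissible_band_split adm.
by exists s; rewrite ?inE -rowsS ?split_s.
Qed.

Theorem mainTheorem13 (R : comRingType) (n : nat) (M : 'M[R]_n)
  (hM : forall i j : 'I_n,
     (i + 1 + (j + 1) != n + 1)%N -> (i + 1 + (j + 1) != n + 2)%N -> M i j = 0) :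
  char_poly M =
  \sum_(k < n.+1)
     'X^(n - k) *
     ((-1) ^+ ((k * k.+1)./2) *
      \sum_(AB : {set 'I_n * 'I_n} * {set 'I_n * 'I_n} |
              admissible_pair k AB.1 AB.2)
         \prod_(p in AB.1 :|: AB.2) M p.1 p.2)%:P.
Proof.
have supp_M i j : (i, j) \notin band n -> M i j = 0.
  by rewrite !inE negb_or => /andP [] /hM.
have card_lt (J : {set 'I_n}) : (#|J| < n.+1)%N.
  by rewrite ltnS -[X in (_ <= X)%N](card_ord n) max_card.
rewrite char_poly_sum_perm_on.
rewrite (partition_big (fun J : {set 'I_n} => inord #|J| : 'I_n.+1) xpredT) //=.
apply: eq_bigr => k _.
rewrite (partition_big (@rows n) (fun J => #|J| == k)) /=; last first.
  by case=> A B /rows_card ->.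
rewrite mulr_sumr rmorph_sum mulr_sumr.
apply: eq_big => J; first by rewrite -val_eqE /= inordK.
rewrite -val_eqE /= inordK // => /eqP <-.
rewrite sum_perm_on_band // mulrA -exprD.
suff -> : (#|J| + 'C(#|J|, 2) = (#|J| * #|J|.+1)./2)%N by [].
by rewrite mulnC -bin2 binS bin1 addnC.
Qed.
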